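(* Let $\mathcal H$ be a finite multi-sorted relational structure and $p$ a prime. Then, up to isomorphism, there exists a unique $p$-rigid multi-sorted structure $\mathcal H^{*p}$ such that $\mathcal H\rightarrow_p^*\mathcal H^{*p}$.
   Context: A multi-sorted relational structure $\mathcal H$ over sorts $[k]$ consists of pairwise disjoint finite sets $H_1,\dots,H_k$ and finitely many relations, each relation symbol $\mathcal R$ having an arity $\ell$ and a type $(i_1,\dots,i_\ell)\in[k]^\ell$, interpreted as a subset of $H_{i_1}\times\dots\times H_{i_\ell}$. Similar structures have the same signature and types. A homomorphism $\varphi=\{\varphi_i\}_{i\in[k]}$, $\varphi_i:G_i\to H_i$, maps every tuple of each relation of $\mathcal G$ to a tuple of the corresponding relation of $\mathcal H$ (applying $\varphi_{i_j}$ in coordinate $j$); isomorphisms and automorphisms are defined as usual (bijective with homomorphic inverse). An automorphism $\pi=\{\pi_i\}$ has order $p$ if each $\pi_i$ is the identity or has order $p$, and at least one $\pi_i$ is not the identity. $\mathcal H$ is $p$-rigid if it has no automorphism of order $p$. For an automorphism $\pi$, $\mathcal H^\pi$ is the substructure of $\mathcal H$ induced by the sets $\mathrm{Fix}(\pi_i)=\{a\in H_i:\pi_i(a)=a\}$ (each relation intersected with the product of the fixed-point sets of the corresponding sorts). Write $\mathcal H\rightarrow_p\mathcal H'$ if there is an automorphism $\pi$ of $\mathcal H$ of order $p$ with $\mathcal H'\cong\mathcal H^\pi$, and $\mathcal H\rightarrow_p^*\mathcal H'$ if there are structures $\mathcal H_1\cong\mathcal H,\ \mathcal H_t\cong\mathcal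 H'$ with $\mathcal H_1\rightarrow_p\mathcal H_2\rightarrow_p\dots\rightarrow_p\mathcal H_t$. *)

From mathcomp Require Import all_boot.
Set Implicit Arguments. Unset Strict Implicit. Unset Printing Implicit Defensive.

Record signature := Sig {
  nsorts : nat;
  nrels : nat;
  arity : 'I_nrels -> nat;
  rtype : forall r : 'I_nrels, 'I_(arity r) -> 'I_nsorts }.

(* A finite multi-sorted structure: one finite carrier per sort (carriers of
   different sorts are distinct types, hence disjoint), and for each relation
   symbol r a subset of H_{i_1} x ... x H_{i_l} (tuples are finite dependent
   functions, so equality of tuples is extensional). *)
Record mstruct (S : signature) := MStruct {
  carrier : 'I_(nsorts S) -> finType;
  rel : forall r : 'I_(nrels S),
        pred {ffun forall j : 'I_(arity r), carrier (rtype j)} }.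

Section Defs.
Variable S : signature.

Definition sfun (G H : mstruct S) :=
  forall i : 'I_(nsorts S), carrier G i -> carrier H i.

Definition map_tuple (G H : mstruct S) (phi : sfun G H) (r : 'I_(nrels S))
  (t : {ffun forall j : 'I_(arity r), carrier G (rtype j)}) :
  {ffun forall j : 'I_(arity r), carrier H (rtype j)} :=
  [ffun j => phi (rtype j) (t j)].

Definition is_hom (G H : mstruct S) (phi : sfun G H) : Prop :=
  forall (r : 'I_(nrels S)) (t : {ffun forall j : 'I_(arity r), carrier G (rtype j)}),
    rel t -> rel (map_tuple phi t).

Definition is_iso (G H : mstruct S) (phi : sfun G H) : Prop :=
  exists psi : sfun H G,
    [/\ forall i, cancel (phi i) (psi i), forall i, cancel (psi i) (phi i),
        is_hom phi & is_hom psi].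

Definition isomorphic (G H : mstruct S) : Prop :=
  exists phi : sfun G H, is_iso phi.

Definition is_auto (H : mstruct S) (pi : sfun H H) : Prop := is_iso pi.

Definition has_order (T : Type) (f : T -> T) (n : nat) : Prop :=
  0 < n /\ (forall x, iter n f x = x) /\
  (forall m, 0 < m < n -> ~ (forall x, iter m f x = x)).

Definition auto_of_order (p : nat) (H : mstruct S) (pi : sfun H H) : Prop :=
  [/\ is_auto pi,
      forall i, (forall x, pi i x = x) \/ has_order (pi i) p
    & exists i, ~ (forall x, pi i x = x)].

Definition p_rigid (p : nat) (H : mstruct S) : Prop :=
  forall pi : sfun H H, ~ auto_of_order p pi.

Definition fix_carrier (H : mstruct S) (pi : sfun H H) (i : 'I_(nsorts S))
  : finType := {x : carrier H i | pi i x == x}.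

Definition fix_struct (H : mstruct S) (pi : sfun H H) : mstruct S :=
  @MStruct S (fix_carrier pi)
    (fun r (t : {ffun forall j : 'I_(arity r), fix_carrier pi (rtype j)}) =>
       rel ([ffun j => val (t j)] :
              {ffun forall j : 'I_(arity r), carrier H (rtype j)})).

Definition pstep (p : nat) (H H' : mstruct S) : Prop :=
  exists pi : sfun H H, auto_of_order p pi /\ isomorphic H' (fix_struct pi).

Inductive pchain (p : nat) : mstruct S -> mstruct S -> Prop :=
  | pchain_refl H : pchain p H H
  | pchain_step H1 H2 H3 : pstep p H1 H2 -> pchain p H2 H3 -> pchain p H1 H3.

Definition pstar (p : nat) (H H' : mstruct S) : Prop :=
  exists H1 Ht, [/\ isomorphic H1 H, isomorphic Ht H' & pchain p H1 Ht].

End Defs.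

From Pilot Require Import Defs.
From Stdlib Require Import Classical.
From mathcomp Require Import all_boot all_fingroup all_solvable.
Import Defs.
Set Implicit Arguments. Unset Strict Implicit. Unset Printing Implicit Defensive.

(* The number of embeddings (injective homomorphisms) G -> H, taken mod p, is
   an invariant of ->_p: an automorphism pi of order p generates a p-group
   acting on these embeddings by composition, and the fixed embeddings are
   exactly those landing in H^pi.  A p-rigid K has p ∤ #Aut K = #Emb(K, K), by
   Cauchy's theorem, so two p-rigid structures reachable from H embed into
   each other, and mutually embeddable finite structures are isomorphic.
   Existence holds because H^pi is strictly smaller than H. *)

Section PrimeOrderIteration.
Variables (T : finType) (p : nat) (f : T -> T).
Hypotheses (p_pr : prime p) (f_inj : injective f)
           (iter_f_p : forall x, iter p f x = x).

Let s := perm f_inj.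

Let sE : s =1 f. Proof. exact: permE. Qed.

Let iter_perm n x : (s ^+ n)%g x = iter n f x.
Proof. by rewrite permX (eq_iter sE). Qed.

Let order_perm_dvd : #[s]%g %| p.
Proof. by rewrite order_dvdn; apply/eqP/permP => x; rewrite iter_perm perm1. Qed.

Lemma card_fixed_mod (A : {set T}) :
  {homo f : x / x \in A} -> #|A| = #|[set x in A | f x == x]| %[mod p].
Proof.
move=> fA.
have pG : (p.-group <[s]>)%g.
  by rewrite /pgroup -orderE (pnat_dvd order_perm_dvd) ?pnat_id.
have iterA n x : x \in A -> iter n f x \in A by elim: n => //= n IH /IH/fA.
have acts : [acts <[s]>%g, on A | 'P].
  rewrite cycle_subG; apply/astabsP => x /=; rewrite /aperm permE.
  apply/idP/idP => [fxA|]; last exact: fA.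
  by rewrite -(iter_f_p x) -(prednK (prime_gt0 p_pr)) iterSr; apply: iterA.
rewrite (pgroup_fix_mod pG acts) afix_cycle; congr (_ %% _).
by apply: eq_card => x; rewrite !inE sub1set inE /= apermE sE.
Qed.

Lemma iter_prime_order : (forall x, f x = x) \/ has_order f p.
Proof.
have [s1 | s_nt] := eqVneq s 1%g; first by left => x; rewrite -sE s1 perm1.
have ord_s : #[s]%g = p.
  by apply/(prime_nt_dvdP p_pr _ order_perm_dvd); rewrite order_eq1.
right; split; [exact: prime_gt0 | split=> // m /andP[m_gt0 m_lt_p] iter_m].
have : #[s]%g %| m.
  by rewrite order_dvdn; apply/eqP/permP => x; rewrite iter_perm perm1 iter_m.
by rewrite ord_s => /(dvdn_leq m_gt0); rewrite leqNgt m_lt_p.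
Qed.

End PrimeOrderIteration.

Section Embeddings.
Variable S : signature.
Implicit Types G K : mstruct S.

Definition tuple_of K (r : 'I_(nrels S)) :=
  {dffun forall j : 'I_(arity r), carrier K (rtype j)}.

(* Families of maps, as elements of a finite type so that embeddings can be
   counted. *)
Definition ffam G K :=
  {dffun forall i : 'I_(nsorts S), {ffun carrier G i -> carrier K i}}.

Definition sfun_of G K (f : ffam G K) : sfun G K := fun i x => f i x.

Definition homb G K (f : ffam G K) : bool :=
  [forall r, [forall t : tuple_of G r, rel t ==> rel (map_tuple (sfun_of f) t)]].

Definition embb G K (f : ffam G K) : bool :=
  [forall i, injectiveb (f i)] && homb f.

Definition nemb G K := #|[set f : ffam G K | embb f]|.

Definition fcomp G K K' (phi : sfun K K') (f : ffam G K) : ffam G K' :=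
  [ffun i => [ffun x => phi i (f i x)]].

Definition ffam_id K : ffam K K := [ffun i => [ffun x => x]].

Lemma fcompE G K K' (phi : sfun K K') (f : ffam G K) i x :
  fcomp phi f i x = phi i (f i x).
Proof. by rewrite !ffunE. Qed.

Lemma embbP G K (f : ffam G K) :
  reflect ((forall i, injective (f i)) /\ is_hom (sfun_of f)) (embb f).
Proof.
apply: (iffP andP) => [[/forallP f_inj /forallP f_hom]|[f_inj f_hom]].
  split=> [i | r t rt]; first exact/injectiveP.
  by have := forallP (f_hom r) t; rewrite rt.
split; first by apply/forallP => i; apply/injectiveP/f_inj.
by apply/forallP => r; apply/forallP => t; apply/implyP/f_hom.
Qed.

Lemma is_hom_ext G K (phi psi : sfun G K) :
  (forall i x, phi i x = psi i x) -> is_hom phi -> is_hom psi.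
Proof.
move=> e phi_hom r t rt; have -> : map_tuple psi t = map_tuple phi t.
  by apply/ffunP => j; rewrite !ffunE e.
exact: phi_hom.
Qed.

Lemma is_hom_id K : is_hom (fun i (x : carrier K i) => x).
Proof.
by move=> r t; congr (is_true (rel _)); apply/ffunP => j; rewrite ffunE.
Qed.

Lemma is_hom_comp G K K' (phi : sfun K K') (psi : sfun G K) :
  is_hom phi -> is_hom psi -> is_hom (fun i x => phi i (psi i x)).
Proof.
move=> phi_hom psi_hom r t /psi_hom/phi_hom.
by congr (is_true (rel _)); apply/ffunP => j; rewrite !ffunE.
Qed.

Lemma embb_id K : embb (ffam_id K).
Proof.
apply/embbP; split=> [i x y | ]; first by rewrite !ffunE.
by apply: is_hom_ext (@is_hom_id K) => i x; rewrite /sfun_of !ffunE.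
Qed.

Lemma embb_comp G K K' (phi : sfun K K') (f : ffam G K) :
  (forall i, injective (phi i)) -> is_hom phi -> embb f -> embb (fcomp phi f).
Proof.
move=> phi_inj phi_hom /embbP[f_inj f_hom]; apply/embbP; split.
  by move=> i x y; rewrite !fcompE => /phi_inj/f_inj.
by apply: is_hom_ext (is_hom_comp phi_hom f_hom) => i x; rewrite /sfun_of fcompE.
Qed.

Lemma iso_inj G K (phi : sfun G K) :
  is_iso phi -> (forall i, injective (phi i)) /\ is_hom phi.
Proof. by case=> psi [phiK _ ? _]; split=> // i; apply: can_inj (phiK i). Qed.

Lemma iso_refl K : isomorphic K K.
Proof. by exists (fun i x => x), (fun i x => x); split=> //; apply: is_hom_id. Qed.

(* A bijective endomorphism of a finite structure maps each relation onto
   itself, so its inverse is a homomorphism too. *)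
Lemma inj_endo_iso K (phi : sfun K K) :
  (forall i, injective (phi i)) -> is_hom phi -> is_iso phi.
Proof.
move=> phi_inj phi_hom; exists (fun i => invF (phi_inj i)).
split=> [i|i||r t' rt']; [exact: invF_f | exact: f_invF | exact: phi_hom |].
pose M (t : tuple_of K r) : tuple_of K r := map_tuple phi t.
have M_inj : injective M.
  move=> t1 t2 /ffunP e; apply/ffunP => j; apply: (phi_inj (rtype j)).
  by have := e j; rewrite !ffunE.
pose R := [set t : tuple_of K r | rel t].
have MR : M @: R \subset R.
  by apply/subsetP => u /imsetP[t]; rewrite !inE => rt ->; apply: phi_hom.
have : t' \in M @: R by rewrite (subset_cardP (card_imset _ M_inj) MR) inE.
case/imsetP => t; rewrite inE => rt ->.
suff -> : map_tuple (fun i => invF (phi_inj i)) (M t) = t by [].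
by apply/ffunP => j; rewrite !ffunE invF_f.
Qed.

(* Both composites are injective endomorphisms, hence automorphisms. *)
Lemma embb_iso K1 K2 (f : ffam K1 K2) (g : ffam K2 K1) :
  embb f -> embb g -> isomorphic K1 K2.
Proof.
move=> /embbP[f_inj f_hom] /embbP[g_inj g_hom].
have [h [gfK _ _ h_hom]] : is_iso (fun i x => g i (f i x)).
  by apply: inj_endo_iso (is_hom_comp g_hom f_hom) => i x y /g_inj/f_inj.
have [k [_ fgK' _ _]] : is_iso (fun i y => f i (g i y)).
  by apply: inj_endo_iso (is_hom_comp f_hom g_hom) => i x y /f_inj/g_inj.
exists (sfun_of f), (fun i y => h i (g i y)); split=> // [i y |].
  by rewrite /sfun_of /= -[y](fgK' i) /= gfK.
exact: is_hom_comp h_hom g_hom.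
Qed.

Lemma nemb_mono G K K' (phi : sfun K K') :
  (forall i, injective (phi i)) -> is_hom phi -> nemb G K <= nemb G K'.
Proof.
move=> phi_inj phi_hom; rewrite /nemb -(card_in_imset (f := fcomp phi)).
  apply/subset_leq_card/subsetP => h /imsetP[f]; rewrite !inE => f_emb ->.
  exact: embb_comp.
move=> f g _ _ e; apply/ffunP => i; apply/ffunP => x; apply: (phi_inj i).
by rewrite -!fcompE e.
Qed.

Lemma nemb_iso G K K' : isomorphic K K' -> nemb G K = nemb G K'.
Proof.
case=> phi [psi [phiK psiK phi_hom psi_hom]]; apply/eqP; rewrite eqn_leq.
rewrite (nemb_mono _ (fun i => can_inj (phiK i)) phi_hom).
exact: (nemb_mono _ (fun i => can_inj (psiK i)) psi_hom).
Qed.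

Lemma auto_iter p K (pi : sfun K K) :
  auto_of_order p pi -> forall i x, iter p (pi i) x = x.
Proof.
case=> _ pi_ord _ i x; case: (pi_ord i) => [|[_ [-> _]]] // pi_id.
by clear pi_ord; elim: p => //= n ->.
Qed.

Lemma card_fixed_embb G K (pi : sfun K K) :
  #|[set f : ffam G K | embb f & fcomp pi f == f]| = nemb G (fix_struct pi).
Proof.
pose incl := @fcomp G (fix_struct pi) K (fun i y => val (y : fix_carrier pi i)).
have incl_inj : injective incl.
  move=> f g /ffunP e; apply/ffunP => i; apply/ffunP => x; apply: val_inj.
  by have /ffunP/(_ x) := e i; rewrite !ffunE.
rewrite /nemb -(card_imset _ incl_inj); apply: eq_card => f; rewrite !inE.
apply/andP/imsetP => [[/embbP[f_inj f_hom] /eqP f_fix] | [g]].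
  have fixed i x : pi i (f i x) == f i x by rewrite -{2}f_fix fcompE.
  pose g : ffam G (fix_struct pi) :=
    [ffun i => [ffun x => exist _ (f i x) (fixed i x) : fix_carrier pi i]].
  exists g; last by apply/ffunP => i; apply/ffunP => x; rewrite fcompE !ffunE.
  rewrite inE; apply/embbP; split.
    by move=> i x y; rewrite !ffunE => /(congr1 val)/f_inj.
  move=> r t /f_hom; congr (is_true (rel _)).
  by apply/ffunP => j; rewrite !ffunE /sfun_of !ffunE.
rewrite inE => g_emb ->; split; first by apply: embb_comp g_emb => // i x y /val_inj.
by apply/eqP/ffunP => i; apply/ffunP => x; rewrite !fcompE; apply/eqP/(valP (g i x)).
Qed.

Lemma nemb_fix_struct_mod p G K (pi : sfun K K) :
  prime p -> auto_of_order p pi -> nemb G K = nemb G (fix_struct pi) %[mod p].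
Proof.
move=> p_pr pi_ord; have [/iso_inj[pi_inj pi_hom] _ _] := pi_ord.
have fcomp_inj : injective (fcomp pi : ffam G K -> _).
  move=> f g e; apply/ffunP => i; apply/ffunP => x; apply: (pi_inj i).
  by rewrite -!fcompE e.
have fcomp_p (f : ffam G K) : iter p (fcomp pi) f = f.
  apply/ffunP => i; apply/ffunP => x; rewrite -[RHS](auto_iter pi_ord (f i x)).
  by elim: (p) => //= n <-; rewrite fcompE.
rewrite {1}/nemb (card_fixed_mod p_pr fcomp_inj fcomp_p); last first.
  by move=> f; rewrite !inE; apply: embb_comp.
by rewrite -card_fixed_embb; congr (_ %% _); apply: eq_card => f; rewrite !inE.
Qed.

Lemma nemb_pchain_mod p G K K' :
  prime p -> pchain p K K' -> nemb G K = nemb G K' %[mod p].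
Proof.
move=> p_pr; elim=> // H1 H2 H3 [pi [pi_ord iso]] _ IH.
by rewrite (nemb_fix_struct_mod G p_pr pi_ord) -(nemb_iso G iso).
Qed.

Lemma nemb_pstar_mod p G K K' :
  prime p -> pstar p K K' -> nemb G K = nemb G K' %[mod p].
Proof.
move=> p_pr [H1 [Ht [iso1 isot chain]]].
by rewrite -(nemb_iso G iso1) (nemb_pchain_mod G p_pr chain) (nemb_iso G isot).
Qed.

(* The embeddings K -> K become permutations of the disjoint union of the
   carriers, where they form a group of order nemb K K. *)
Section AutomorphismGroup.
Variable K : mstruct S.

Let T : finType := {i : 'I_(nsorts S) & carrier K i}.
Local Notation tag_of := (Tagged (fun i => carrier K i)).

Definition total_fun (f : ffam K K) (u : T) : T := tag_of (f (tag u) (tagged u)).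

(* [insubd] only serves to make [fam_perm] total; it is applied to injective
   families only. *)
Definition fam_perm (f : ffam K K) : {perm T} :=
  insubd (1%g : {perm T}) [ffun u => total_fun f u].

Lemma fam_permE (f : ffam K K) i x :
  (forall i, injective (f i)) -> fam_perm f (tag_of x) = tag_of (f i x).
Proof.
move=> f_inj; rewrite -pvalE insubdK ?ffunE //.
apply/injectiveP => -[i1 x1] [i2 x2]; rewrite !ffunE /total_fun /= => e.
have ei : i1 = i2 by move/(congr1 tag): e.
by subst i2; rewrite (f_inj i1 _ _ (eq_from_Tagged e)).
Qed.

Lemma fam_permM (f g : ffam K K) : embb f -> embb g ->
  (fam_perm f * fam_perm g)%g = fam_perm (fcomp (sfun_of g) f).
Proof.
move=> /embbP[f_inj _] /embbP[g_inj _].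
have gf_inj i : injective (fcomp (sfun_of g) f i).
  by move=> x y; rewrite !fcompE => /g_inj/f_inj.
by apply/permP => -[i x]; rewrite permM !fam_permE // fcompE.
Qed.

Lemma iter_fam_perm (f : ffam K K) n i x : (forall i, injective (f i)) ->
  (fam_perm f ^+ n)%g (tag_of x) = tag_of (iter n (f i) x).
Proof. by move=> f_inj; rewrite permX; elim: n => //= n ->; rewrite fam_permE. Qed.

Definition aut_perms : {set {perm T}} := fam_perm @: [set f : ffam K K | embb f].

Lemma mem_aut_perms (f : ffam K K) : embb f -> fam_perm f \in aut_perms.
Proof. by move=> f_emb; apply: imset_f; rewrite inE. Qed.

Lemma aut_perms_group : group_set aut_perms.
Proof.
apply/group_setP; split.
  have /embbP[id_inj _] := @embb_id K.
  have -> : 1%g = fam_perm (ffam_id K).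
    by apply/permP => -[i x]; rewrite perm1 fam_permE // !ffunE.
  exact (mem_aut_perms (@embb_id K)).
move=> s t /imsetP[f + ->] /imsetP[g + ->]; rewrite !inE => f_emb g_emb.
have /embbP[g_inj g_hom] := g_emb.
rewrite fam_permM //; exact (mem_aut_perms (embb_comp g_inj g_hom f_emb)).
Qed.

Lemma card_aut_perms : #|aut_perms| = nemb K K.
Proof.
apply: card_in_imset => f g; rewrite !inE => /embbP[f_inj _] /embbP[g_inj _] /permP e.
apply/ffunP => i; apply/ffunP => x; apply: (@eq_from_Tagged _ (fun i => carrier K i)).
by have := e (tag_of x); rewrite !fam_permE.
Qed.

Lemma nemb_dvd_auto_of_order p :
  prime p -> p %| nemb K K -> exists pi : sfun K K, auto_of_order p pi.
Proof.
move=> p_pr; rewrite -card_aut_perms => p_dvd.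
have [_ /imsetP[f f_emb ->] ord_f] := Cauchy (G := Group aut_perms_group) p_pr p_dvd.
rewrite inE in f_emb; case/embbP: (f_emb) => f_inj f_hom.
exists (sfun_of f); split; first exact: inj_endo_iso.
  move=> i; apply: iter_prime_order p_pr (f_inj i) _ => x.
  have := iter_fam_perm p x f_inj; rewrite -{1}ord_f expg_order perm1.
  by move=> e; symmetry; apply: eq_from_Tagged e.
apply: NNPP => f_id; have f1 : fam_perm f = 1%g.
  apply/permP => -[i x]; rewrite perm1 fam_permE //; congr Tagged.
  by apply: NNPP => fx; apply: f_id; exists i => /(_ x).
by move: p_pr; rewrite -ord_f f1 order1.
Qed.

End AutomorphismGroup.

Lemma rigid_iso_of_nemb_mod p K1 K2 :
  prime p -> p_rigid p K1 -> p_rigid p K2 ->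
  (forall G, nemb G K1 = nemb G K2 %[mod p]) -> isomorphic K1 K2.
Proof.
move=> p_pr rig1 rig2 e.
have emb_exists A B : p_rigid p A -> nemb A A = nemb A B %[mod p] ->
    exists f : ffam A B, embb f.
  move=> rigA eAB; suff : 0 < nemb A B.
    by rewrite card_gt0 => /set0Pn[f]; rewrite inE; exists f.
  rewrite lt0n; apply/eqP => nAB0.
  have p_dvd : p %| nemb A A by rewrite /dvdn eAB nAB0 mod0n.
  by have [pi] := nemb_dvd_auto_of_order p_pr p_dvd; apply: rigA.
have [f f_emb] := emb_exists _ _ rig1 (e K1).
have [g g_emb] := emb_exists _ _ rig2 (esym (e K2)).
exact: embb_iso f_emb g_emb.
Qed.

End Embeddings.

Section Existence.
Variable S : signature.
Implicit Types H : mstruct S.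

Definition msize H := \sum_(i < nsorts S) #|carrier H i|.

Lemma msize_fix_struct p H (pi : sfun H H) :
  auto_of_order p pi -> msize (fix_struct pi) < msize H.
Proof.
case=> _ _ [i0 pi_nid].
have le_fix i : #|fix_carrier pi i| <= #|carrier H i| by rewrite card_sig max_card.
have lt_fix : #|fix_carrier pi i0| < #|carrier H i0|.
  rewrite card_sig -(cardC [pred x | pi i0 x == x]) -addn1 leq_add2l.
  apply/card_gt0P; apply: NNPP => no_moved; apply: pi_nid => x.
  by apply: NNPP => moved; apply: no_moved; exists x; rewrite !inE; apply/eqP.
rewrite /msize (bigD1 i0) // [X in _ < X](bigD1 i0) //= -addSn leq_add //.
exact: leq_sum.
Qed.

Lemma pstar_refl p H : pstar p H H.
Proof. by exists H, H; split; [apply: iso_refl | apply: iso_refl | constructor]. Qed.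

Lemma pstar_fix_struct p H (pi : sfun H H) Hs :
  auto_of_order p pi -> pstar p (fix_struct pi) Hs -> pstar p H Hs.
Proof.
move=> pi_ord [H1 [Ht [iso1 isot chain]]].
exists H, Ht; split=> //; first exact: iso_refl.
by apply: pchain_step chain; exists pi.
Qed.

Lemma exists_rigid_pstar p H : exists Hs, p_rigid p Hs /\ pstar p H Hs.
Proof.
have [n] := ubnP (msize H); elim: n H => [//|n IH] H size_lt.
have [rigH | not_rigH] := classic (p_rigid p H).
  by exists H; split; last exact: pstar_refl.
have [pi pi_ord] := not_all_not_ex _ _ not_rigH.
have [Hs [rigHs star]] := IH _ (leq_trans (msize_fix_struct pi_ord) size_lt).
by exists Hs; split; last exact: pstar_fix_struct pi_ord star.
Qed.

End Existence.

Theorem proposition2p1 (S : signature) (H : mstruct S) (p : nat) :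
  prime p ->
  exists Hs : mstruct S,
    [/\ p_rigid p Hs, pstar p H Hs &
        forall H' : mstruct S, p_rigid p H' -> pstar p H H' -> isomorphic H' Hs].
Proof.
move=> p_pr; have [Hs [rigHs star]] := exists_rigid_pstar p H.
exists Hs; split=> // H' rigH' star'.
apply: (rigid_iso_of_nemb_mod p_pr rigH' rigHs) => G.
by rewrite -(nemb_pstar_mod G p_pr star') (nemb_pstar_mod G p_pr star).
Qed.
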